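(* Fix parameters $\ell_r>0$, $\ell_f>0$, $\bar r>0$, $\sigma\in(0,1)$, $\beta_{\max}>0$ and a sampling period $T>0$. Consider the kinematic bicycle model (KBM) with state $\chi=(r,\xi,v)\in\mathbb{R}^3$, $r>0$, and control $\omega=(a,\beta)\in\Omega_{\text{admis.}}:=\mathbb{R}\times[-\beta_{\max},\beta_{\max}]$, with dynamics $\dot\chi=f_{\text{KBM}}(\chi,\omega)$, where $$\dot r = v\cos(\xi-\beta),\qquad \dot\xi=-\tfrac{1}{r}v\sin(\xi-\beta)-\tfrac{v}{\ell_r}\sin(\beta),\qquad \dot v=a,$$ and let $h_{\bar r,\sigma}(\chi)=\frac{\sigma\cos(\xi/2)+1-\sigma}{\bar r}-\frac{1}{r}$. Let $\chi[n_0-1]$ be a state with $h_{\bar r,\sigma}(\chi[n_0-1])>0$ and let $\omega[n_0]\in\Omega_{\text{admis.}}$ be a fixed control. Let $\zeta:[0,\infty)\to\mathbb{R}^3$ be the solution of $\dot\zeta(t)=f_{\text{KBM}}(\zeta(t),\omega[n_0])$, $\zeta(0)=\chi[n_0-1]$ (i.e. the constant control $\omega[n_0]$ is applied, zero-order hold, starting from $\chi[n_0-1]$), so that the discretized KBM states are $\chi[n_0-1+n]=\zeta(nT)$ for $n\ge 0$. Let $\mathcal D\subseteq\{\chi: r>0\}$ be a set containing this trajectory on the relevant time interval, and let $L_{h_{\bar r,\sigma}}$ and $L_{f_{\text{KBM}}}$ be upper bounds on the Lipschitz constants (with respect to the Euclidean norm) on $\mathcal D$ of $h_{\bar r,\sigma}$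 and of $\chi\mapsto f_{\text{KBM}}(\chi,\omega[n_0])$, respectively. Let $\nu=\nu(\chi[n_0-1],\omega[n_0])>0$ solve $$\sqrt{2}\cdot L_{h_{\bar r,\sigma}}\cdot\lVert f_{\text{KBM}}(\chi[n_0-1],\omega[n_0])\rVert_2\cdot\nu\cdot e^{L_{f_{\text{KBM}}}\cdot\nu}=h_{\bar r,\sigma}(\chi[n_0-1]),$$ and define $$\Delta_{\max}(\chi[n_0-1],\omega[n_0]):=\max\big(\lfloor \nu/T\rfloor-1,\,0\big).$$ Then for every integer $n$ with $0\le n\le \Delta_{\max}(\chi[n_0-1],\omega[n_0])$ we have $h_{\bar r,\sigma}(\chi[n_0-1+n])>0$; i.e. holding the constant control $\omega[n_0]$ from state $\chi[n_0-1]$ preserves $h_{\bar r,\sigma}>0$ for at least $\Delta_{\max}$ samples.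
   Context: The KBM models an autonomous vehicle relative to a fixed point obstacle at the origin: $r$ is the distance to the origin, $\xi$ the orientation of the vehicle relative to the direction to the origin, $v$ the speed, $a$ the acceleration input and $\beta$ a (reparametrized) steering input. The set of safe states is $\{\chi: h_{\bar r,\sigma}(\chi)\ge 0\}$, which excludes a disk of radius $\bar r$ about the origin. Discrete-time signals are samples $x[n]=x(nT)$ of continuous-time signals, and inputs are applied with zero-order hold over each sampling period. $\lVert\cdot\rVert_2$ denotes the Euclidean norm on $\mathbb{R}^3$. *)

From Stdlib Require Import Reals ZArith.
From Coquelicot Require Import Coquelicot.
Open Scope R_scope.

Definition state := (R * R * R)%type.
Definition st_r (c : state) : R := fst (fst c).
Definition st_xi (c : state) : R := snd (fst c).
Definition st_v (c : state) : R := snd c.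

Definition norm3 (c : state) : R :=
  sqrt (st_r c ^ 2 + st_xi c ^ 2 + st_v c ^ 2).
Definition sub3 (c d : state) : state :=
  (st_r c - st_r d, st_xi c - st_xi d, st_v c - st_v d).

Definition f_KBM (l_r : R) (c : state) (om : R * R) : state :=
  let '(a, beta) := om in
  (st_v c * cos (st_xi c - beta),
   - (1 / st_r c) * st_v c * sin (st_xi c - beta) - st_v c / l_r * sin beta,
   a).

Definition h_bar (rbar sigma : R) (c : state) : R :=
  (sigma * cos (st_xi c / 2) + 1 - sigma) / rbar - 1 / st_r c.

Definition admissible (beta_max : R) (om : R * R) : Prop :=
  - beta_max <= snd om <= beta_max.

Definition Delta_max (nu T : R) : Z := Z.max (Int_part (nu / T) - 1) 0.

(* Gronwall's inequality bounds the drift of the trajectory: while it stays in D,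
   |zeta t - zeta 0| <= |f(zeta 0)| t e^(L_f t).  As h is L_h-Lipschitz on D, for every
   0 <= t <= nu this gives h(zeta t) >= h(zeta 0) - L_h |f(zeta 0)| nu e^(L_f nu)
   = (1 - 1/sqrt 2) h(zeta 0) > 0, and every sample time n T with n <= Delta_max is such
   a t.  Nothing about the KBM is used beyond the two Lipschitz bounds.
   The vector field drives zeta only on (0, oo), with mere right continuity at 0, so
   Gronwall is proved directly: the smoothed distance S = sqrt(|zeta - zeta 0|^2 + eps^2)
   is differentiable, S e^(-L s) - |f(zeta 0)| s is nonincreasing on (0, t], and letting
   s -> 0+ and then eps -> 0 gives the bound. *)
From Stdlib Require Import Reals ZArith Lra Lia Psatz.
From Coquelicot Require Import Coquelicot.
Open Scope R_scope.

Lemma exp_le_compat x y : x <= y -> exp x <= exp y.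
Proof.
  intros [Hlt | ->]; [now left; apply exp_increasing | apply Rle_refl].
Qed.

Lemma exp_opp_mult_le1 L s : 0 <= L -> 0 <= s -> exp (- (L * s)) <= 1.
Proof. intros HL Hs; rewrite <- exp_0; apply exp_le_compat; nra. Qed.

Lemma Rle_of_mult_exp_opp x y L : x * exp (- L) <= y -> x <= y * exp L.
Proof.
  intros H.
  replace x with (x * exp (- L) * exp L)
    by (rewrite Rmult_assoc, <- exp_plus, Rplus_opp_l, exp_0; ring).
  apply Rmult_le_compat_r; [left; apply exp_pos | exact H].
Qed.

Lemma nonincreasing_of_derive_nonpos (f df : R -> R) a b :
  a <= b ->
  (forall x, a <= x <= b -> is_derive f x (df x)) ->
  (forall x, a <= x <= b -> df x <= 0) ->
  f b <= f a.
Proof.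
  intros Hab Hder Hneg.
  destruct (MVT_gen f a b df) as [c [Hc Hmvt]];
    rewrite ?Rmin_left, ?Rmax_right in * by exact Hab.
  - intros x Hx; apply Hder; lra.
  - intros x Hx; apply continuity_pt_filterlim, (ex_derive_continuous f x).
    exists (df x); apply Hder; exact Hx.
  - assert (df c <= 0) by (apply Hneg; exact Hc).
    nra.
Qed.

Definition dot3 (c d : state) : R :=
  st_r c * st_r d + st_xi c * st_xi d + st_v c * st_v d.

Lemma norm3_ge0 c : 0 <= norm3 c.
Proof. apply sqrt_pos. Qed.

Lemma norm3_sub3_diag c : norm3 (sub3 c c) = 0.
Proof.
  unfold norm3, sub3, st_r, st_xi, st_v; simpl.
  rewrite <- sqrt_0; f_equal; ring.
Qed.

Lemma dot3_le_norm3 c d : dot3 c d <= norm3 c * norm3 d.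
Proof.
  unfold dot3, norm3.
  destruct c as [[a1 a2] a3], d as [[b1 b2] b3]; unfold st_r, st_xi, st_v; simpl.
  rewrite <- sqrt_mult by nra.
  destruct (Rle_or_lt (a1 * b1 + a2 * b2 + a3 * b3) 0) as [Hneg | Hpos].
  - apply Rle_trans with 0; [exact Hneg | apply sqrt_pos].
  - rewrite <- (sqrt_pow2 (a1 * b1 + a2 * b2 + a3 * b3)) by lra.
    apply sqrt_le_1_alt.
    assert (E : (a1^2 + a2^2 + a3^2) * (b1^2 + b2^2 + b3^2) - (a1*b1 + a2*b2 + a3*b3)^2
              = (a1*b2 - a2*b1)^2 + (a1*b3 - a3*b1)^2 + (a2*b3 - a3*b2)^2) by ring.
    pose proof (pow2_ge_0 (a1*b2 - a2*b1)); pose proof (pow2_ge_0 (a1*b3 - a3*b1));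
      pose proof (pow2_ge_0 (a2*b3 - a3*b2)).
    lra.
Qed.

Lemma dot3_sub3_split c d e : dot3 c d = dot3 c (sub3 d e) + dot3 c e.
Proof. unfold dot3, sub3, st_r, st_xi, st_v; simpl; ring. Qed.

Lemma norm3_le_sum_abs c : norm3 c <= Rabs (st_r c) + Rabs (st_xi c) + Rabs (st_v c).
Proof.
  unfold norm3.
  rewrite <- (sqrt_pow2 (Rabs (st_r c) + Rabs (st_xi c) + Rabs (st_v c)))
    by (pose proof (Rabs_pos (st_r c)); pose proof (Rabs_pos (st_xi c));
        pose proof (Rabs_pos (st_v c)); lra).
  apply sqrt_le_1_alt.
  rewrite <- (pow2_abs (st_r c)), <- (pow2_abs (st_xi c)), <- (pow2_abs (st_v c)).
  pose proof (Rabs_pos (st_r c)); pose proof (Rabs_pos (st_xi c));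
    pose proof (Rabs_pos (st_v c)).
  nra.
Qed.

(* Unlike norm3, differentiable along any differentiable curve, also where it vanishes. *)
Definition snorm3 (eps : R) (c : state) : R :=
  sqrt (st_r c ^ 2 + st_xi c ^ 2 + st_v c ^ 2 + eps ^ 2).

Lemma snorm3_pos eps c : 0 < eps -> 0 < snorm3 eps c.
Proof. intros Heps; apply sqrt_lt_R0; nra. Qed.

Lemma norm3_le_snorm3 eps c : norm3 c <= snorm3 eps c.
Proof. apply sqrt_le_1_alt; nra. Qed.

Lemma snorm3_le eps c : 0 <= eps -> snorm3 eps c <= norm3 c + eps.
Proof.
  intros Heps.
  pose proof (norm3_ge0 c) as HN.
  unfold snorm3; rewrite <- (sqrt_pow2 (norm3 c + eps)) by lra.
  apply sqrt_le_1_alt.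
  assert (HN2 : norm3 c ^ 2 = st_r c ^ 2 + st_xi c ^ 2 + st_v c ^ 2)
    by (apply pow2_sqrt; nra).
  nra.
Qed.

Lemma snorm3_slope_le eps L d f f0 :
  0 < eps -> 0 <= L -> norm3 (sub3 f f0) <= L * norm3 d ->
  dot3 d f / snorm3 eps d - L * snorm3 eps d <= norm3 f0.
Proof.
  intros Heps HL Hlip.
  pose proof (snorm3_pos eps d Heps) as HS.
  pose proof (norm3_le_snorm3 eps d) as HNS.
  pose proof (norm3_ge0 d) as HN.
  pose proof (norm3_ge0 f0) as HF0.
  (* d.f = d.(f - f0) + d.f0 <= |d| (L |d| + |f0|) <= S (L S + |f0|) *)
  assert (Hdot : dot3 d f <= snorm3 eps d * (L * snorm3 eps d + norm3 f0)).
  { rewrite (dot3_sub3_split d f f0).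
    pose proof (dot3_le_norm3 d (sub3 f f0)).
    pose proof (dot3_le_norm3 d f0).
    assert (norm3 d * norm3 (sub3 f f0) <= snorm3 eps d * (L * snorm3 eps d)).
    { apply Rmult_le_compat; [exact HN | apply norm3_ge0 | exact HNS |].
      apply Rle_trans with (1 := Hlip); apply Rmult_le_compat_l; assumption. }
    assert (norm3 d * norm3 f0 <= snorm3 eps d * norm3 f0)
      by (apply Rmult_le_compat_r; assumption).
    lra. }
  assert (dot3 d f / snorm3 eps d <= L * snorm3 eps d + norm3 f0)
    by (apply Rle_div_l; [exact HS | rewrite Rmult_comm; exact Hdot]).
  lra.
Qed.

Definition is_derive3 (z : R -> state) (t : R) (dz : state) : Prop :=
  is_derive (fun s => st_r (z s)) t (st_r dz) /\
  is_derive (fun s => st_xi (z s)) t (st_xi dz) /\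
  is_derive (fun s => st_v (z s)) t (st_v dz).

Lemma is_derive_snorm3 z p eps t dz :
  0 < eps -> is_derive3 z t dz ->
  is_derive (fun s => snorm3 eps (sub3 (z s) p)) t
    (dot3 (sub3 (z t) p) dz / snorm3 eps (sub3 (z t) p)).
Proof.
  intros Heps [Hr [Hxi Hv]].
  pose proof (snorm3_pos eps (sub3 (z t) p) Heps) as HS.
  set (rr := fun s => st_r (z s)); change (is_derive rr t (st_r dz)) in Hr.
  set (xx := fun s => st_xi (z s)); change (is_derive xx t (st_xi dz)) in Hxi.
  set (vv := fun s => st_v (z s)); change (is_derive vv t (st_v dz)) in Hv.
  change (is_derive
    (fun s => sqrt ((rr s - st_r p) ^ 2 + (xx s - st_xi p) ^ 2 + (vv s - st_v p) ^ 2 + eps ^ 2))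
    t (((rr t - st_r p) * st_r dz + (xx t - st_xi p) * st_xi dz + (vv t - st_v p) * st_v dz)
       / sqrt ((rr t - st_r p) ^ 2 + (xx t - st_xi p) ^ 2 + (vv t - st_v p) ^ 2 + eps ^ 2))).
  change (0 < sqrt ((rr t - st_r p) ^ 2 + (xx t - st_xi p) ^ 2 + (vv t - st_v p) ^ 2 + eps ^ 2))
    in HS.
  clearbody rr xx vv.
  auto_derive.
  - repeat split; try (eexists; eassumption).
    pose proof (pow2_ge_0 (rr t + - st_r p)); pose proof (pow2_ge_0 (xx t + - st_xi p));
      pose proof (pow2_ge_0 (vv t + - st_v p)); pose proof (pow_lt eps 2 Heps); simpl in *; lra.
  - replace (Derive (fun s => rr s) t) with (st_r dz) by (symmetry; now apply is_derive_unique).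
    replace (Derive (fun s => xx s) t) with (st_xi dz) by (symmetry; now apply is_derive_unique).
    replace (Derive (fun s => vv s) t) with (st_v dz) by (symmetry; now apply is_derive_unique).
    match goal with |- context [sqrt ?A] =>
      replace A with ((rr t - st_r p) ^ 2 + (xx t - st_xi p) ^ 2 + (vv t - st_v p) ^ 2
                      + eps ^ 2) by ring end.
    field; lra.
Qed.

Definition right_continuous0 (z : R -> state) : Prop :=
  filterlim (fun t => st_r (z t)) (at_right 0) (locally (st_r (z 0))) /\
  filterlim (fun t => st_xi (z t)) (at_right 0) (locally (st_xi (z 0))) /\
  filterlim (fun t => st_v (z t)) (at_right 0) (locally (st_v (z 0))).

Lemma right_continuous0_near_start z t delta :
  right_continuous0 z -> 0 < t -> 0 < delta ->
  exists s, 0 < s < t /\ norm3 (sub3 (z s) (z 0)) <= delta.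
Proof.
  intros [Cr [Cxi Cv]] Ht Hdelta.
  assert (Hdelta3 : 0 < delta / 3) by lra.
  apply filterlim_locally with (eps := mkposreal _ Hdelta3) in Cr, Cxi, Cv.
  assert (Hstart : at_right 0 (fun s => 0 < s < t)).
  { apply filter_imp with (2 := open_lt t 0 Ht); intros s Hst Hs; lra. }
  destruct (filter_ex _ (filter_and _ _ Hstart (filter_and _ _ Cr (filter_and _ _ Cxi Cv))))
    as [s [Hs [Br [Bxi Bv]]]].
  exists s; split; [exact Hs |].
  change (Rabs (st_r (z s) - st_r (z 0)) < delta / 3) in Br.
  change (Rabs (st_xi (z s) - st_xi (z 0)) < delta / 3) in Bxi.
  change (Rabs (st_v (z s) - st_v (z 0)) < delta / 3) in Bv.
  assert (Hsum : norm3 (sub3 (z s) (z 0)) <= Rabs (st_r (z s) - st_r (z 0))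
            + Rabs (st_xi (z s) - st_xi (z 0)) + Rabs (st_v (z s) - st_v (z 0)))
    by exact (norm3_le_sum_abs _).
  lra.
Qed.

Section Gronwall.

Variables (F : state -> state) (z : R -> state) (L t : R).
Hypothesis L_ge0 : 0 <= L.
Hypothesis z_right_continuous : right_continuous0 z.
Hypothesis z_ode : forall s, 0 < s -> is_derive3 z s (F (z s)).
Hypothesis F_lipschitz : forall s, 0 <= s <= t ->
  norm3 (sub3 (F (z s)) (F (z 0))) <= L * norm3 (sub3 (z s) (z 0)).

Lemma gronwall_potential_nonincreasing eps s : 0 < eps -> 0 < s <= t ->
  snorm3 eps (sub3 (z t) (z 0)) * exp (- (L * t)) - norm3 (F (z 0)) * t
  <= snorm3 eps (sub3 (z s) (z 0)) * exp (- (L * s)) - norm3 (F (z 0)) * s.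
Proof.
  intros Heps [Hs Hst].
  set (S := fun u => snorm3 eps (sub3 (z u) (z 0))).
  apply (nonincreasing_of_derive_nonpos
    (fun u => S u * exp (- (L * u)) - norm3 (F (z 0)) * u)
    (fun u => (dot3 (sub3 (z u) (z 0)) (F (z u)) / S u - L * S u) * exp (- (L * u))
              - norm3 (F (z 0)))); [exact Hst | intros u Hu ..].
  - assert (HS' : is_derive S u (dot3 (sub3 (z u) (z 0)) (F (z u)) / S u))
      by (apply is_derive_snorm3; [exact Heps | apply z_ode; lra]).
    clearbody S.
    auto_derive; [now exists (dot3 (sub3 (z u) (z 0)) (F (z u)) / S u) |].
    replace (Derive (fun u => S u) u) with (dot3 (sub3 (z u) (z 0)) (F (z u)) / S u)
      by (symmetry; now apply is_derive_unique).
    ring.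
  - pose proof (snorm3_slope_le eps L (sub3 (z u) (z 0)) (F (z u)) (F (z 0))
                  Heps L_ge0 (F_lipschitz u ltac:(lra))) as Hslope.
    pose proof (exp_opp_mult_le1 L u L_ge0 ltac:(lra)).
    pose proof (exp_pos (- (L * u))).
    pose proof (norm3_ge0 (F (z 0))).
    change (snorm3 eps (sub3 (z u) (z 0))) with (S u) in Hslope.
    set (slope := dot3 (sub3 (z u) (z 0)) (F (z u)) / S u - L * S u) in *.
    nra.
Qed.

Theorem gronwall_displacement : 0 <= t ->
  norm3 (sub3 (z t) (z 0)) <= norm3 (F (z 0)) * t * exp (L * t).
Proof.
  intros [Ht | <-].
  2: { rewrite norm3_sub3_diag, Rmult_0_r, Rmult_0_l; apply Rle_refl. }
  apply Rle_of_mult_exp_opp, Rle_plus_epsilon; intros e He.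
  destruct (right_continuous0_near_start z t (e / 2) z_right_continuous Ht ltac:(lra))
    as [s [Hs Hzs]].
  pose proof (gronwall_potential_nonincreasing (e / 2) s ltac:(lra) ltac:(lra)) as Hpot.
  pose proof (norm3_le_snorm3 (e / 2) (sub3 (z t) (z 0))) as Hnt.
  pose proof (snorm3_le (e / 2) (sub3 (z s) (z 0)) ltac:(lra)) as Hns.
  pose proof (snorm3_pos (e / 2) (sub3 (z s) (z 0)) ltac:(lra)).
  pose proof (exp_pos (- (L * t))).
  pose proof (exp_pos (- (L * s))).
  pose proof (exp_opp_mult_le1 L s L_ge0 ltac:(lra)).
  pose proof (norm3_ge0 (F (z 0))).
  nra.
Qed.

End Gronwall.

Lemma gronwall_displacement_horizon F z L t nu :
  right_continuous0 z ->
  (forall s, 0 < s -> is_derive3 z s (F (z s))) ->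
  (forall s, 0 <= s <= t ->
     norm3 (sub3 (F (z s)) (F (z 0))) <= L * norm3 (sub3 (z s) (z 0))) ->
  0 <= t <= nu ->
  norm3 (sub3 (z t) (z 0)) <= norm3 (F (z 0)) * nu * exp (L * nu).
Proof.
  intros Hcont Hode Hlip Ht.
  pose proof (norm3_ge0 (F (z 0))).
  destruct (Rle_or_lt 0 L) as [HL | HL].
  - apply Rle_trans with (1 := gronwall_displacement F z L t HL Hcont Hode Hlip (proj1 Ht)).
    apply Rmult_le_compat; [apply Rmult_le_pos; lra | left; apply exp_pos | | ].
    + apply Rmult_le_compat_l; lra.
    + apply exp_le_compat, Rmult_le_compat_l; lra.
  - (* a negative Lipschitz constant forces z t = z 0 *)
    pose proof (Hlip t ltac:(lra)).
    pose proof (norm3_ge0 (sub3 (z t) (z 0))).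
    pose proof (norm3_ge0 (sub3 (F (z t)) (F (z 0)))).
    assert (0 <= norm3 (F (z 0)) * nu * exp (L * nu))
      by (apply Rmult_le_pos; [apply Rmult_le_pos | left; apply exp_pos]; lra).
    nra.
Qed.

Lemma Delta_max_sample_time_le nu T n :
  0 < nu -> 0 < T -> (Z.of_nat n <= Delta_max nu T)%Z -> INR n * T <= nu.
Proof.
  intros Hnu HT Hn.
  destruct n as [| n]; [simpl; lra |].
  assert (Hfloor : (Z.of_nat (S n) + 1 <= Int_part (nu / T))%Z)
    by (unfold Delta_max in Hn; lia).
  apply IZR_le in Hfloor; rewrite plus_IZR, <- INR_IZR_INZ in Hfloor.
  pose proof (proj1 (base_Int_part (nu / T))) as Hbase.
  assert (Hle : (INR (S n) + 1) * T <= nu)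
    by (apply Rle_div_r; [exact HT | lra]).
  lra.
Qed.

Theorem lemma2
  (l_r l_f rbar sigma beta_max T : R)
  (Hlr : 0 < l_r) (Hlf : 0 < l_f) (Hrbar : 0 < rbar)
  (Hsigma : 0 < sigma < 1) (Hbmax : 0 < beta_max) (HT : 0 < T)
  (chi0 : state) (om : R * R)
  (Hr0 : 0 < st_r chi0)
  (Hh0 : 0 < h_bar rbar sigma chi0)
  (Hom : admissible beta_max om)
  (zeta : R -> state)
  (Hz0 : zeta 0 = chi0)
  (Hcont0 : filterlim (fun t => st_r (zeta t)) (at_right 0) (locally (st_r chi0)) /\
            filterlim (fun t => st_xi (zeta t)) (at_right 0) (locally (st_xi chi0)) /\
            filterlim (fun t => st_v (zeta t)) (at_right 0) (locally (st_v chi0)))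
  (Hode : forall t, 0 < t ->
     is_derive (fun s => st_r (zeta s)) t (st_r (f_KBM l_r (zeta t) om)) /\
     is_derive (fun s => st_xi (zeta s)) t (st_xi (f_KBM l_r (zeta t) om)) /\
     is_derive (fun s => st_v (zeta s)) t (st_v (f_KBM l_r (zeta t) om)))
  (D : state -> Prop)
  (HD : forall c, D c -> 0 < st_r c)
  (nu : R) (Hnu : 0 < nu)
  (HzD : forall t, 0 <= t <= nu -> D (zeta t))
  (L_h L_f : R)
  (HLh : forall x y, D x -> D y ->
     Rabs (h_bar rbar sigma x - h_bar rbar sigma y) <= L_h * norm3 (sub3 x y))
  (HLf : forall x y, D x -> D y ->
     norm3 (sub3 (f_KBM l_r x om) (f_KBM l_r y om)) <= L_f * norm3 (sub3 x y))
  (Hnu_eq : sqrt 2 * L_h * norm3 (f_KBM l_r chi0 om) * nu * exp (L_f * nu)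
            = h_bar rbar sigma chi0) :
  forall n : nat, (Z.of_nat n <= Delta_max nu T)%Z ->
    0 < h_bar rbar sigma (zeta (INR n * T)).
Proof.
  intros n Hn; subst chi0.
  set (t := INR n * T).
  assert (Ht : 0 <= t <= nu).
  { split; [apply Rmult_le_pos; [apply pos_INR | lra] |].
    now apply Delta_max_sample_time_le. }
  assert (D0 : D (zeta 0)) by (apply HzD; lra).
  assert (Dt : D (zeta t)) by (apply HzD; lra).
  set (P := norm3 (f_KBM l_r (zeta 0) om) * nu * exp (L_f * nu)).
  assert (HP : 0 <= P)
    by (apply Rmult_le_pos; [apply Rmult_le_pos; [apply norm3_ge0 | lra] | left; apply exp_pos]).
  assert (Hdrift : norm3 (sub3 (zeta t) (zeta 0)) <= P)
    by exact (gronwall_displacement_horizon (fun c => f_KBM l_r c om) zeta L_f t nu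
                Hcont0 Hode (fun s Hs => HLf _ _ (HzD s ltac:(lra)) D0) Ht).
  assert (Hh : h_bar rbar sigma (zeta 0) - L_h * norm3 (sub3 (zeta t) (zeta 0))
               <= h_bar rbar sigma (zeta t)).
  { pose proof (HLh _ _ Dt D0) as Hlip.
    pose proof (Rle_abs (h_bar rbar sigma (zeta 0) - h_bar rbar sigma (zeta t))) as Habs.
    rewrite Rabs_minus_sym in Habs; lra. }
  assert (Hsqrt2 : 1 < sqrt 2) by (rewrite <- sqrt_1; apply sqrt_lt_1_alt; lra).
  assert (HhP : h_bar rbar sigma (zeta 0) = sqrt 2 * (L_h * P))
    by (rewrite <- Hnu_eq; unfold P; ring).
  assert (HLhP : 0 < L_h * P) by nra.
  assert (HLh0 : 0 <= L_h) by nra.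
  assert (L_h * norm3 (sub3 (zeta t) (zeta 0)) <= L_h * P)
    by (apply Rmult_le_compat_l; assumption).
  nra.
Qed.
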